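(* Let $c=(h\leftarrow B)$ be a clause, and consider two priority derivation steps $a|K\xrightarrow{c}Q$ (1) and $a\tau\underline{\pi}|(K\tau\underline{\pi}+X)\xrightarrow{c}R$ (2), where $\tau$ is a substitution, $\underline\pi$ a shifting, $X$ a p-goal, and step (2) is a congruent lowering of step (1) by $X$. Then there exist a substitution $\delta$ and a shifting $\underline{\rho}$ such that $R/((a|K)\tau\underline{\pi})=Q\delta\underline{\rho}$; moreover $\delta$ is a renaming if $\tau$ is a renaming.
   Context: A p-atom is a pair $a[p]$ of an atom $a$ and a rational priority $p$. A p-goal is a finite set of p-atoms with pairwise distinct priorities, regarded as a list ordered by increasing priority. Substitutions act on atoms and leave priorities unchanged. A clause is $h\leftarrow B$ with $h$ an atom and $B$ a p-goal. For p-goals with no common priority, $F+G=F\cup G$; $F|G$ denotes $F+G$ when every priority of $F$ is smaller than every priority of $G$. A shifting $\underline{\pi}$ is a strictly increasing bijection $\mathbb{Q}\to\mathbb{Q}$; $G\underline{\pi}$ replaces each priority $p$ of $G$ by $\underline{\pi}(p)$. Priority derivation step: for a p-goal $a|F$ ($a$ of least priority), clause $c=(h\leftarrow B)$, renaming $\xi$ with $var(a|F)\cap var(c\xi)=\emptyset$, idempotent relevant mgu $\theta$ of $a$ and $h\xi$, and shifting $\underline{\pi}$ with $F$, $B\xi\underline{\pi}$ sharing no priority, $a|F\xrightarrow{c\xi,\theta}(F+B\xi\underline{\pi})\theta$. Lowering: given steps $a|K\xrightarrow{c}(K+B\xi'\underline{\theta}')\alpha'$ and $a\lambda\underline{\sigma}|(K\lambda\underline{\sigma}+X)\xrightarrow{c}(X+K\lambda\underline{\sigma}+B\xi''\underline{\theta}'')\alpha''$,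 the second is a lowering of the first by $X$; it is a congruent lowering by $X$ if some shifting $\underline{\rho}$ satisfies $K\underline{\rho}=K\underline{\sigma}$ and $B\underline{\theta}'\underline{\rho}=B\underline{\theta}''$. Sub-resolvent of a step: for a step $a|(F+G)\xrightarrow{c}Q=((F+G)+B\xi\underline{\pi})\alpha$, $Q/a=B\xi\underline{\pi}\alpha$, $Q/F=F\alpha$, and $Q/(a|F)=Q/a+Q/F$ (the p-atoms of $Q$ descending from $a|F$). In the claim, $R/((a|K)\tau\underline\pi)$ is thus the resolvent $R$ without the instantiated atoms of $X$. *)

From mathcomp Require Import all_boot all_order all_algebra.
Set Implicit Arguments. Unset Strict Implicit. Unset Printing Implicit Defensive.
Import Order.TTheory GRing.Theory Num.Theory.
Local Open Scope ring_scope.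

Inductive term : Type :=
| V : nat -> term
| Fn : nat -> seq term -> term.

Definition atom : Type := (nat * seq term)%type.

Definition subst : Type := nat -> term.

Fixpoint tsubst (s : subst) (t : term) : term :=
  match t with
  | V x => s x
  | Fn f ts => Fn f (map (tsubst s) ts)
  end.

Definition asubst (s : subst) (a : atom) : atom := (a.1, map (tsubst s) a.2).

Fixpoint tvars (t : term) : seq nat :=
  match t with
  | V x => [:: x]
  | Fn _ ts => flatten (map tvars ts)
  end.

Definition avars (a : atom) : seq nat := flatten (map tvars a.2).

Definition renaming (s : subst) : Prop :=
  exists f : nat -> nat, bijective f /\ forall x, s x = V (f x).

Definition unifier (s : subst) (a1 a2 : atom) : Prop := asubst s a1 = asubst s a2.

Definition mgu (s : subst) (a1 a2 : atom) : Prop :=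
  unifier s a1 a2 /\
  forall e, unifier e a1 a2 -> exists g : subst, forall x, e x = tsubst g (s x).

Definition idempotent (s : subst) : Prop := forall x, tsubst s (s x) = s x.

Definition relevant (s : subst) (a1 a2 : atom) : Prop :=
  forall x, s x <> V x ->
    (x \in avars a1 ++ avars a2) /\
    (forall y, y \in tvars (s x) -> y \in avars a1 ++ avars a2).

Definition patom : Type := (atom * rat)%type.

(** A p-goal is represented as the list of its p-atoms sorted by strictly
    increasing priority (this is the canonical representation of a finite
    set of p-atoms with pairwise distinct priorities). *)
Definition pgoal (G : seq patom) : Prop := sorted (fun p q : patom => p.2 < q.2) G.

Definition prios (G : seq patom) : seq rat := map snd G.

Definition no_common (F G : seq patom) : Prop :=
  forall p, p \in prios F -> p \notin prios G.

(** F + G (for p-goals without common priority): the union, listed by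
    increasing priority. *)
Definition pg_add (F G : seq patom) : seq patom :=
  sort (fun p q : patom => p.2 <= q.2) (F ++ G).

Definition shifting (pi : rat -> rat) : Prop :=
  (forall x y : rat, x < y -> pi x < pi y) /\ bijective pi.

Definition pa_subst (s : subst) (p : patom) : patom := (asubst s p.1, p.2).
Definition pa_shift (pi : rat -> rat) (p : patom) : patom := (p.1, pi p.2).
Definition pg_subst (s : subst) (G : seq patom) : seq patom := map (pa_subst s) G.
Definition pg_shift (pi : rat -> rat) (G : seq patom) : seq patom := map (pa_shift pi) G.

Definition pg_vars (G : seq patom) : seq nat := flatten (map (fun p => avars p.1) G).

Record clause := Clause { head : atom; body : seq patom }.

Definition csubst (s : subst) (c : clause) : clause :=
  Clause (asubst s (head c)) (pg_subst s (body c)).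

Definition cvars (c : clause) : seq nat := avars (head c) ++ pg_vars (body c).

(** Priority derivation step  a|F --(c xi, th)--> (F + B xi pi) th,
    with all witnesses (renaming xi, mgu th, shifting pi) explicit. *)
Definition pstep (c : clause) (a : patom) (F : seq patom)
    (xi th : subst) (pi : rat -> rat) (Q : seq patom) : Prop :=
  pgoal (a :: F) /\ pgoal (body c) /\
  renaming xi /\
  (forall x, x \in pg_vars (a :: F) -> x \notin cvars (csubst xi c)) /\
  idempotent th /\ relevant th a.1 (asubst xi (head c)) /\
  mgu th a.1 (asubst xi (head c)) /\
  shifting pi /\
  no_common F (pg_shift pi (pg_subst xi (body c))) /\
  Q = pg_subst th (pg_add F (pg_shift pi (pg_subst xi (body c)))).

(* Step (1) resolves [a] with the mgu [al1] of [a] and the renamed head [h xi1].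
   In the lowered step (2), [al2] unifies [a tau] with [h xi2]; since the goal
   [a|K] and the renamed clause [c xi1] share no variable, the substitution acting
   as [al2 o tau] on the goal and as [al2 o xi2 o xi1^-1] on [c xi1] is a unifier of
   [a] and [h xi1], so it factors as [delta o al1].  On atoms the two resolvents then
   differ by [delta], and on priorities by the shifting given by congruence.
   If [tau] is a renaming, step (1) is in turn an instance of step (2) via
   [tau^-1], and the symmetric factorisation is a left inverse of [delta] on the
   variables of the instantiated atoms; so [delta] agrees there with a renaming. *)

From Pilot Require Import Defs.
From mathcomp Require Import all_boot all_order all_algebra.
From Stdlib Require Import FunctionalExtensionality Classical.
From Stdlib Require List.
Import Order.TTheory.
Local Open Scope ring_scope.

Set Implicit Arguments. Unset Strict Implicit. Unset Printing Implicit Defensive.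

(* The automatically generated induction principle of [term] has no hypothesis
   for the arguments of [Fn]. *)
Definition term_nested_ind (P : term -> Prop) (HV : forall x, P (V x))
    (HFn : forall f ts, (forall t, List.In t ts -> P t) -> P (Fn f ts)) :
    forall t, P t :=
  fix ind t := match t with
  | V x => HV x
  | Fn f ts => HFn f ts ((fix ind_seq (l : seq term) : forall u, List.In u l -> P u :=
       match l with
       | [::] => fun u (Hu : False) => False_ind _ Hu
       | t0 :: l' => fun u Hu => match Hu with
              | or_introl e => eq_ind t0 P (ind t0) u e
              | or_intror Hu' => ind_seq l' u Hu' end
       end) ts)
  end.

Lemma mem_flatten_map_In (A : Type) (f : A -> seq nat) s u x :
  List.In u s -> x \in f u -> x \in flatten (map f s).
Proof.
elim: s => [|y s IH] //= [<-|Hu] Hx; rewrite mem_cat ?Hx // IH ?orbT //.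
Qed.

Lemma flatten_map_In (A : Type) (f : A -> seq nat) s x :
  x \in flatten (map f s) -> exists2 u, List.In u s & x \in f u.
Proof.
elim: s => [|y s IH] //=; rewrite mem_cat => /orP[Hx|/IH[u Hu Hx]].
  by exists y; first left.
by exists u; first right.
Qed.

Lemma map_eq_In (A B : Type) (f g : A -> B) (s : seq A) x :
  map f s = map g s -> List.In x s -> f x = g x.
Proof. by elim: s => [|y s IH] //= [Efg Es] [<-|/IH]; last exact. Qed.

Definition scomp (s r : subst) : subst := fun x => tsubst s (r x).

Lemma tsubst_comp s r t : tsubst s (tsubst r t) = tsubst (scomp s r) t.
Proof.
elim/term_nested_ind: t => [x|f ts IH] //=; congr Fn.
by rewrite -map_comp; apply: List.map_ext_in => u /IH.
Qed.

Lemma eq_in_tsubst s s' t : {in tvars t, s =1 s'} -> tsubst s t = tsubst s' t.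
Proof.
elim/term_nested_ind: t => [x|f ts IH] /= Hss'; first by apply: Hss'; rewrite mem_seq1.
congr Fn; apply: List.map_ext_in => u Hu; apply: IH => // x Hx.
exact/Hss'/(mem_flatten_map_In Hu).
Qed.

Lemma mem_tvars_tsubst s t x y :
  x \in tvars t -> y \in tvars (s x) -> y \in tvars (tsubst s t).
Proof.
elim/term_nested_ind: t => [z|f ts IH] /=; first by rewrite mem_seq1 => /eqP->.
move=> /flatten_map_In[u Hu Hx] Hy; rewrite -map_comp.
exact: (mem_flatten_map_In (f := tvars \o tsubst s) Hu (IH u Hu Hx Hy)).
Qed.

Lemma tsubst_fixed_var s t : tsubst s t = t -> {in tvars t, forall x, s x = V x}.
Proof.
elim/term_nested_ind: t => [x|f ts IH] /=; first by move=> Hx y; rewrite mem_seq1 => /eqP->.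
case=> Hts y /flatten_map_In[u Hu Hy].
by apply: IH Hy => //; rewrite (map_eq_In (g := id) _ Hu) // map_id.
Qed.

Lemma asubst_comp s r a : asubst s (asubst r a) = asubst (scomp s r) a.
Proof.
by rewrite /asubst -map_comp; congr pair; apply: eq_map => t; apply: tsubst_comp.
Qed.

Lemma eq_in_asubst s s' a : {in avars a, s =1 s'} -> asubst s a = asubst s' a.
Proof.
move=> Hss'; congr pair; apply: List.map_ext_in => t Ht.
by apply: eq_in_tsubst => x Hx; apply/Hss'/(mem_flatten_map_In Ht).
Qed.

Lemma mem_avars_asubst s a x y :
  x \in avars a -> y \in tvars (s x) -> y \in avars (asubst s a).
Proof.
move=> /flatten_map_In[t Ht Hx] Hy; rewrite /avars -map_comp.
exact: (mem_flatten_map_In Ht (mem_tvars_tsubst Hx Hy)).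
Qed.

Lemma pg_vars_shift pi G : pg_vars (pg_shift pi G) = pg_vars G.
Proof. by rewrite /pg_vars /pg_shift -map_comp. Qed.

Lemma mem_pg_vars_subst s G x y :
  x \in pg_vars G -> y \in tvars (s x) -> y \in pg_vars (pg_subst s G).
Proof.
move=> /flatten_map_In[p Hp Hx] Hy; rewrite /pg_vars /pg_subst -map_comp.
exact: (mem_flatten_map_In Hp (mem_avars_asubst Hx Hy)).
Qed.

Lemma pg_vars_add F G : pg_vars (pg_add F G) =i pg_vars F ++ pg_vars G.
Proof.
pose vp (p : patom) := (avars p.1, p.2).
have pg_varsE H : pg_vars H = flatten (map fst (map vp H)) by rewrite -map_comp.
move=> x; rewrite !pg_varsE /pg_add.
have -> : map vp (sort (fun p q : patom => p.2 <= q.2) (F ++ G))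
          = sort (fun u v : seq nat * rat => u.2 <= v.2) (map vp (F ++ G)).
  by rewrite sort_map.
rewrite -flatten_cat -!map_cat.
by apply/perm_mem/perm_flatten/perm_map; rewrite perm_sort map_cat.
Qed.

Lemma pg_subst_comp s r G : pg_subst s (pg_subst r G) = pg_subst (scomp s r) G.
Proof.
by rewrite /pg_subst -map_comp; apply: eq_map => p; rewrite /= /pa_subst asubst_comp.
Qed.

Lemma pg_shift_subst rho s G : pg_shift rho (pg_subst s G) = pg_subst s (pg_shift rho G).
Proof. by rewrite /pg_shift /pg_subst -!map_comp. Qed.

Lemma eq_in_pg_subst s s' G : {in pg_vars G, s =1 s'} -> pg_subst s G = pg_subst s' G.
Proof.
move=> Hss'; apply: List.map_ext_in => p Hp; congr pair.
by apply: eq_in_asubst => x Hx; apply/Hss'/(mem_flatten_map_In Hp).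
Qed.

Lemma pg_subst_add s F G : pg_subst s (pg_add F G) = pg_add (pg_subst s F) (pg_subst s G).
Proof. by rewrite /pg_add /pg_subst -map_cat sort_map. Qed.

Lemma pg_shift_add rho F G : shifting rho ->
  pg_shift rho (pg_add F G) = pg_add (pg_shift rho F) (pg_shift rho G).
Proof.
move=> [rho_mono _]; rewrite /pg_add /pg_shift -map_cat sort_map; congr (map _ (sort _ _)).
by apply: functional_extensionality => p; apply: functional_extensionality => q;
  rewrite /relpre /= (le_mono rho_mono).
Qed.

Lemma mem_cvars_csubst s c x y :
  x \in cvars c -> y \in tvars (s x) -> y \in cvars (csubst s c).
Proof.
rewrite /cvars /= !mem_cat => /orP[Hx|Hx] Hy.
  by rewrite (mem_avars_asubst Hx Hy).
by rewrite (mem_pg_vars_subst Hx Hy) orbT.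
Qed.

Lemma pstep_mgu_factor c a F xi th pi Q (s t : subst) :
  pstep c a F xi th pi Q -> asubst s a.1 = asubst t (Defs.head c) ->
  exists delta : subst, {in pg_vars (a :: F), scomp delta th =1 s} /\
                        {in cvars c, scomp (scomp delta th) xi =1 t}.
Proof.
case=> _ [_ [[f [[g fK _] Hxi]] [Hfresh [_ [_ [[_ Hmgu] _]]]]]] Hst.
have f_fresh y : y \in cvars c -> f y \notin pg_vars (a :: F).
  move=> Hy; apply/negP => /Hfresh.
  by rewrite (mem_cvars_csubst Hy) // Hxi mem_seq1.
(* [s] and [t] can be glued since the goal and the renamed clause are variable-disjoint. *)
pose e x := if x \in pg_vars (a :: F) then s x else t (g x).
have e_goal : {in pg_vars (a :: F), e =1 s} by move=> x Hx; rewrite /e Hx.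
have e_clause : {in cvars c, scomp e xi =1 t}.
  by move=> y Hy; rewrite /scomp Hxi /= /e (negbTE (f_fresh y Hy)) fK.
have [gam Hgam] : exists gam : subst, forall x, e x = tsubst gam (th x).
  apply: Hmgu; rewrite /unifier asubst_comp (@eq_in_asubst (scomp e xi) t); last first.
    by move=> y Hy; apply: e_clause; rewrite /cvars mem_cat Hy.
  by rewrite -Hst; apply: eq_in_asubst => x Hx; apply: e_goal; rewrite /= mem_cat Hx.
exists gam; split => [x Hx|y Hy]; first by rewrite /scomp -Hgam e_goal.
by rewrite -e_clause // /scomp Hxi /= Hgam.
Qed.

Definition swapn (u v y : nat) : nat := if y == u then v else if y == v then u else y.

Lemma swapnK u v : involutive (swapn u v).
Proof.
move=> y; rewrite /swapn; have [->|yNu] := eqVneq y u.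
  by rewrite eqxx; case: eqVneq.
have [->|yNv] := eqVneq y v; first by rewrite !eqxx.
by rewrite (negbTE yNu) (negbTE yNv).
Qed.

Lemma inj_in_extend_bijective (S : seq nat) (d : nat -> nat) :
  {in S &, injective d} -> exists2 F, bijective F & {in S, F =1 d}.
Proof.
elim: S => [|z S IH] d_inj; first by exists id => //; exists id.
have [|F bijF FE] := IH; first by move=> x y Hx Hy; apply: d_inj; rewrite inE ?Hx ?Hy orbT.
exists (swapn (F z) (d z) \o F); first exact/bij_comp/bijF/inv_bij/swapnK.
move=> y; rewrite inE /= /swapn => /orP[/eqP->|Hy]; first by rewrite eqxx.
have [->|yNz] := eqVneq y z; first by rewrite eqxx.
rewrite (inj_eq (bij_inj bijF)) (negbTE yNz) FE //.
suff /negbTE-> : d y != d z by [].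
by apply: contra yNz => /eqP/d_inj-> //; rewrite inE ?Hy ?eqxx ?orbT.
Qed.

Lemma renaming_of_left_inverse (d g : subst) (S : seq nat) :
  {in S, forall z, tsubst g (d z) = V z} -> exists2 r, renaming r & {in S, r =1 d}.
Proof.
move=> dK; pose k z := if d z is V w then w else z.
have dE : {in S, forall z, d z = V (k z)}.
  by move=> z /dK; rewrite /k; case: (d z).
have [F bijF FE] : exists2 F, bijective F & {in S, F =1 k}.
  apply: inj_in_extend_bijective => z1 z2 Hz1 Hz2 Ek.
  by have := dK z1 Hz1; rewrite dE // Ek -dE // dK // => -[].
by exists (fun z => V (F z)); [exists F | move=> z Hz; rewrite dE // FE].
Qed.

Lemma renaming_of_left_inverse_in (d g u : subst) (S : seq nat) :
  {in S, scomp g (scomp d u) =1 u} -> exists2 r, renaming r & {in S, scomp r u =1 scomp d u}.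
Proof.
move=> dK; pose W := flatten (map (tvars \o u) S).
have [|r ren_r rE] := @renaming_of_left_inverse d g W.
  move=> z /flatten_mapP[x Hx Hz]; apply: (tsubst_fixed_var (s := scomp g d)) Hz.
  by rewrite -tsubst_comp; apply: dK.
exists r => // x Hx; apply: eq_in_tsubst => z Hz; apply: rE.
by apply/flatten_mapP; exists x.
Qed.



Section InstanceStep.

Variables (c : clause) (a a' : patom) (F F' Q Q' : seq patom) (tau : subst).
Variables (xi al xi' al' : subst) (pi pi' : rat -> rat).
Hypotheses (step : pstep c a F xi al pi Q) (step' : pstep c a' F' xi' al' pi' Q').
Hypothesis a'E : a'.1 = asubst tau a.1.

Lemma pstep_instance_factor :
  exists delta : subst, {in pg_vars (a :: F), scomp delta al =1 scomp al' tau} /\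
                        {in cvars c, scomp (scomp delta al) xi =1 scomp al' xi'}.
Proof.
case: step' => _ [_ [_ [_ [_ [_ [[al'_unif _] _]]]]]].
by apply: pstep_mgu_factor step _; rewrite -!asubst_comp -a'E.
Qed.

Hypothesis F'_vars : {subset pg_vars (pg_subst tau F) <= pg_vars F'}.

Lemma pstep_renaming_instance_factor : renaming tau ->
  exists2 delta : subst, renaming delta &
    {in pg_vars (a :: F), scomp delta al =1 scomp al' tau} /\
    {in cvars c, scomp (scomp delta al) xi =1 scomp al' xi'}.
Proof.
move=> [ft [[gt ftK _] tauE]].
case: (step) => _ [_ [[f [_ xiE]] _]].
have [d [dF dc]] := pstep_instance_factor.
(* Step [step] is in turn an instance of [step'], via the inverse renaming. *)
have [d' [d'F' d'c]] : exists d' : subst,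
    {in pg_vars (a' :: F'), scomp d' al' =1 scomp al (fun x => V (gt x))} /\
    {in cvars c, scomp (scomp d' al') xi' =1 scomp al xi}.
  have [_ [_ [_ [_ [_ [_ [[al_unif _] _]]]]]]] := step.
  apply: (pstep_mgu_factor step'); rewrite a'E -[RHS]asubst_comp -al_unif !asubst_comp.
  by apply: eq_in_asubst => x _; rewrite /scomp tauE /= ftK.
have ft_vars z : z \in pg_vars (a :: F) -> ft z \in pg_vars (a' :: F').
  rewrite /= !mem_cat a'E => /orP[Hz|Hz]; apply/orP; [left|right].
    by apply: (mem_avars_asubst Hz); rewrite tauE mem_seq1.
  by apply/F'_vars/(mem_pg_vars_subst Hz); rewrite tauE mem_seq1.
have [|r ren_r rE] :=
  @renaming_of_left_inverse_in d d' al (pg_vars (a :: F) ++ map f (cvars c)).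
  move=> z; rewrite mem_cat => /orP[Hz | /mapP[y Hy ->]].
    have := d'F' _ (ft_vars z Hz); have := dF z Hz.
    by rewrite /scomp tauE /= ftK => ->.
  have := d'c y Hy; have := dc y Hy.
  by rewrite /scomp xiE /= => -> <-; rewrite tsubst_comp.
exists r => //; split => [z Hz|y Hy].
  by rewrite rE ?dF // mem_cat Hz.
by rewrite -dc // /scomp xiE /= -!/(scomp _ _ _) rE // mem_cat map_f ?orbT.
Qed.

End InstanceStep.

Lemma congruent_lowering_resolvent (K B Q : seq patom)
    (tau xi1 al1 xi2 al2 delta : subst) (pi th1 th2 rho : rat -> rat) :
  Q = pg_subst al1 (pg_add K (pg_shift th1 (pg_subst xi1 B))) ->
  shifting rho -> pg_shift rho K = pg_shift pi K ->
  pg_shift rho (pg_shift th1 B) = pg_shift th2 B ->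
  {in pg_vars K, scomp delta al1 =1 scomp al2 tau} ->
  {in pg_vars B, scomp (scomp delta al1) xi1 =1 scomp al2 xi2} ->
  pg_subst al2 (pg_add (pg_shift pi (pg_subst tau K)) (pg_shift th2 (pg_subst xi2 B)))
    = pg_shift rho (pg_subst delta Q).
Proof.
move=> -> rho_sh rhoK rhoB HK HB.
rewrite !pg_subst_add pg_shift_add // !pg_shift_subst !pg_subst_comp rhoK rhoB.
by congr pg_add; apply: eq_in_pg_subst => x; rewrite pg_vars_shift => Hx;
  [exact/esym/HK | exact/esym/HB].
Qed.

Theorem mainTheorem5
  (c : clause) (a : patom) (K Q X R : seq patom)
  (tau : subst) (pi : rat -> rat)
  (xi1 al1 : subst) (th1 : rat -> rat)
  (xi2 al2 : subst) (th2 : rat -> rat) :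
  pstep c a K xi1 al1 th1 Q ->
  shifting pi -> pgoal X ->
  no_common (pg_shift pi (pg_subst tau K)) X ->
  pstep c (pa_shift pi (pa_subst tau a))
        (pg_add (pg_shift pi (pg_subst tau K)) X) xi2 al2 th2 R ->
  (exists rho, shifting rho /\ pg_shift rho K = pg_shift pi K /\
     pg_shift rho (pg_shift th1 (body c)) = pg_shift th2 (body c)) ->
  exists (delta : subst) (rho : rat -> rat),
    [/\ shifting rho,
        pg_subst al2 (pg_add (pg_shift pi (pg_subst tau K))
                             (pg_shift th2 (pg_subst xi2 (body c))))
          = pg_shift rho (pg_subst delta Q) &
        (renaming tau -> renaming delta)].
Proof.
move=> step1 _ _ _ step2 [rho [rho_sh [rhoK rhoB]]].
case: (step1) => _ [_ [_ [_ [_ [_ [_ [_ [_ Q_def]]]]]]]].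
have tau_vars : {subset pg_vars (pg_subst tau K)
                   <= pg_vars (pg_add (pg_shift pi (pg_subst tau K)) X)}.
  by move=> x Hx; rewrite pg_vars_add mem_cat pg_vars_shift Hx.
have [d ren_d [dK dB]] : exists2 d : subst, (renaming tau -> renaming d) &
    {in pg_vars (a :: K), scomp d al1 =1 scomp al2 tau} /\
    {in cvars c, scomp (scomp d al1) xi1 =1 scomp al2 xi2}.
  case: (classic (renaming tau)) => [ren_tau | Nren_tau].
    have [d ren_d dE] := pstep_renaming_instance_factor step1 step2 erefl tau_vars ren_tau.
    by exists d.
  have [d dE] := pstep_instance_factor step1 step2 erefl.
  by exists d => // /Nren_tau.
exists d, rho; split => //.
apply: congruent_lowering_resolvent Q_def rho_sh rhoK rhoB _ _.
  by apply: sub_in1 dK => x Hx; rewrite /= mem_cat Hx orbT.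
by apply: sub_in1 dB => y Hy; rewrite /cvars mem_cat Hy orbT.
Qed.
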